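(* Let $n,m$ be positive integers with $m+2\le n$ and let $H$ be a graph. Then $$\gamma_{gr}(P_n^m\circ H)=\begin{cases}\left\lceil \frac{n}{m+1}\right\rceil (\gamma_{gr} (H)-(m+1))+n+m & \text{if } \gamma_{gr}(H)\geq m+1,\\ 2\gamma_{gr}(H)+n-m-2 & \text{if } \gamma_{gr}(H)\leq m.\end{cases}$$
   Context: $P_n^m$ has vertex set $[n]$, distinct $i,j$ adjacent iff $|i-j|\le m$. The lexicographic product $G\circ H$ has vertex set $V(G)\times V(H)$, with $(g_1,h_1)$ adjacent to $(g_2,h_2)$ iff $g_1g_2\in E(G)$, or $g_1=g_2$ and $h_1h_2\in E(H)$. $\gamma_{gr}$ is the Grundy domination number: the maximum length of a sequence $(v_1,\dots,v_k)$ of distinct vertices whose set is dominating and such that each $N[v_i]\setminus\bigcup_{j<i}N[v_j]$ is non-empty ($N[\cdot]$ the closed neighborhood). *)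

From mathcomp Require Import all_boot.
Set Implicit Arguments. Unset Strict Implicit. Unset Printing Implicit Defensive.

(* A finite simple graph is a vertex finType T with an adjacency relation
   e : rel T that is symmetric and irreflexive. *)

Definition cnbh (T : finType) (e : rel T) (v : T) : {set T} :=
  [set u | (u == v) || e v u].

Fixpoint legal_from (T : finType) (e : rel T) (covered : {set T}) (s : seq T)
  : bool :=
  match s with
  | [::] => true
  | v :: s' => ~~ (cnbh e v \subset covered)
               && legal_from e (covered :|: cnbh e v) s'
  end.

Definition dominating_seq (T : finType) (e : rel T) (s : seq T) : bool :=
  \bigcup_(v <- s) cnbh e v == [set: T].

Definition is_gds (T : finType) (e : rel T) (s : seq T) : bool :=
  [&& uniq s, dominating_seq e s & legal_from e set0 s].

(* Grundy domination number: maximum length of a Grundy dominating sequence.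
   Such sequences are duplicate-free, so their length is at most #|T|. *)
Definition gamma_gr (T : finType) (e : rel T) : nat :=
  \max_(k < #|T|.+1 | [exists t : k.-tuple T, is_gds e t]) k.

Definition lexprod (T1 T2 : finType) (e1 : rel T1) (e2 : rel T2) : rel (T1 * T2) :=
  fun x y => e1 x.1 y.1 || ((x.1 == y.1) && e2 x.2 y.2).

(* P_n^m on vertex set 'I_n (i.e. {0,...,n-1}, a shift of [n]):
   distinct i, j adjacent iff |i - j| <= m. *)
Definition path_pow (n m : nat) : rel 'I_n :=
  fun i j => (i != j) && (i - j <= m) && (j - i <= m).

Definition ceildiv (a b : nat) : nat := (a + b.-1) %/ b.
Arguments path_pow : clear implicits.

(* Layers of P_n^m o H are the copies {i} x V(H).
   Lower bound: a Grundy dominating sequence of H placed in layer 0 dominates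
   layers 0..m; then the single vertices (t, x0), t = 1, 2, ..., each footprint
   the one new layer t + m; k - 1 further copies of the sequence of H, in
   layers m + 1 apart, finish the domination.  This gives a Grundy dominating
   sequence of length k gamma(H) + n - 1 - (k - 1)(m + 1), and k = ceil(n/(m+1))
   or k = 2 yields the two cases.
   Upper bound: call a step internal if it footprints a vertex of its own
   layer.  A non-internal step footprints a vertex of a layer j near its own,
   hence completes the domination of the whole layer j, and distinct such steps
   complete distinct layers.  The H-coordinates of the internal steps in one
   layer form a legal sequence of H: at most gamma(H) of them, and at most
   gamma(H) - 1 unless that layer is completed by one of them.  Layers that
   contain internal steps are pairwise more than m apart, so there are at most
   ceil(n/(m+1)) of them, and between two consecutive ones, the first step in
   whichever of the two is visited first completes the m layers of the gap
   next to it.  Counting layers gives the bound. *)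

From mathcomp Require Import all_boot zify.
Set Implicit Arguments. Unset Strict Implicit. Unset Printing Implicit Defensive.

(** * Grundy sequences *)

Section GrundySequences.
Variables (T : finType) (e : rel T).

Definition cnbhs (s : seq T) : {set T} := \bigcup_(v <- s) cnbh e v.

Lemma cnbhs_nil : cnbhs [::] = set0.
Proof. by rewrite /cnbhs big_nil. Qed.

Lemma cnbhs_cons v s : cnbhs (v :: s) = cnbh e v :|: cnbhs s.
Proof. by rewrite /cnbhs big_cons. Qed.

Lemma cnbhs_cat s1 s2 : cnbhs (s1 ++ s2) = cnbhs s1 :|: cnbhs s2.
Proof. by rewrite /cnbhs big_cat. Qed.

Lemma cnbhsP w s : reflect (exists2 v, v \in s & w \in cnbh e v) (w \in cnbhs s).
Proof. by rewrite /cnbhs bigcup_seq; exact: bigcupP. Qed.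

Lemma legal_from_cat (C : {set T}) s1 s2 :
  legal_from e C (s1 ++ s2) = legal_from e C s1 && legal_from e (C :|: cnbhs s1) s2.
Proof.
elim: s1 C => [|v s IH] C /=; first by rewrite cnbhs_nil setU0.
by rewrite IH cnbhs_cons setUA andbA.
Qed.

Lemma legal_from_uniq (C : {set T}) s : legal_from e C s -> uniq s.
Proof.
elim: s C => [|v s IH] C //= /andP [_ legal_s]; rewrite (IH _ legal_s) andbT.
have notin_cnbhs (D : {set T}) w r :
    legal_from e D r -> w \in r -> ~~ (cnbh e w \subset D).
  elim: r D => [|u r IHr] D //= /andP [fresh_u legal_r].
  rewrite in_cons => /predU1P [->//|w_r].
  by apply: contra (IHr _ legal_r w_r) => /subset_trans; apply; apply: subsetUl.
by apply/negP => /(notin_cnbhs _ _ _ legal_s); rewrite subsetUr.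
Qed.

Lemma mem_cnbh v : v \in cnbh e v.
Proof. by rewrite inE eqxx. Qed.

Lemma legal_from_completion (C : {set T}) :
  exists s, legal_from e C s /\ C :|: cnbhs s = setT.
Proof.
have [k] : exists k, #|~: C| < k by exists #|~: C|.+1.
elim: k C => [//|k IH] C lt_k.
case: (pickP [pred u | u \notin C]) => [u /= u_C | C_full]; last first.
  exists [::]; split=> //; rewrite cnbhs_nil setU0; apply/setP => x.
  by rewrite in_setT; exact/negbFE/C_full.
have lt_k' : #|~: (C :|: cnbh e u)| < k.
  rewrite -ltnS (leq_trans _ lt_k) // ltnS proper_card // properC.
  apply/properP; split; first exact: subsetUl.
  by exists u; rewrite // in_setU mem_cnbh orbT.
have [s [legal_s cover_s]] := IH _ lt_k'.
exists (u :: s); rewrite /= cnbhs_cons setUA cover_s legal_s andbT; split=> //.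
by apply: contra u_C => /subsetP; apply; rewrite mem_cnbh.
Qed.

Lemma is_gdsE s : is_gds e s = legal_from e set0 s && (cnbhs s == setT).
Proof.
rewrite /is_gds /dominating_seq -/(cnbhs s).
case: (boolP (legal_from e set0 s)) => [legal_s|]; last by rewrite !andbF.
by rewrite (legal_from_uniq legal_s) andbT.
Qed.

Lemma legal_extends_to_gds s : legal_from e set0 s ->
  exists s', is_gds e (s ++ s') /\ cnbhs s :|: cnbhs s' = setT.
Proof.
move=> legal_s; have [s' []] := legal_from_completion (set0 :|: cnbhs s).
rewrite set0U => legal_s' cover_s'; exists s'; split=> //.
by rewrite is_gdsE legal_from_cat legal_s set0U legal_s' cnbhs_cat cover_s' eqxx.
Qed.

Lemma gds_size_lt_card s : is_gds e s -> size s < #|T|.+1.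
Proof. by case/and3P=> /card_uniqP <- _ _; rewrite ltnS max_card. Qed.

Lemma gds_size_le_gamma s : is_gds e s -> size s <= gamma_gr e.
Proof.
move=> gds_s; have lt_s := gds_size_lt_card gds_s.
pose P (k : 'I_#|T|.+1) := [exists t : k.-tuple T, is_gds e t].
have P_s : P (Ordinal lt_s) by apply/existsP; exists (in_tuple s).
exact: (@leq_bigmax_cond _ P (fun k => nat_of_ord k) _ P_s).
Qed.

Lemma gamma_gr_attained : exists s, is_gds e s /\ size s = gamma_gr e.
Proof.
have [s [gds_s _]] := legal_extends_to_gds (erefl : legal_from e set0 [::]).
have lt_s := gds_size_lt_card gds_s.
pose P (k : 'I_#|T|.+1) := [exists t : k.-tuple T, is_gds e t].
have P_s : P (Ordinal lt_s) by apply/existsP; exists (in_tuple s).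
rewrite /gamma_gr (bigmax_eq_arg _ P_s); case: arg_maxnP => // k /existsP [t gds_t] _.
by exists t; rewrite size_tuple.
Qed.

Lemma legal_size_le_gamma s : legal_from e set0 s -> size s <= gamma_gr e.
Proof.
move=> /legal_extends_to_gds [s' [/gds_size_le_gamma gds_ss' _]].
by apply: leq_trans gds_ss'; rewrite size_cat leq_addr.
Qed.

Lemma legal_size_lt_gamma s :
  legal_from e set0 s -> cnbhs s != setT -> size s < gamma_gr e.
Proof.
move=> /legal_extends_to_gds [s' [/gds_size_le_gamma gds_ss' cover_s']] not_dom.
apply: leq_trans gds_ss'; rewrite size_cat -addn1 leq_add2l lt0n size_eq0.
by apply: contra not_dom => /eqP s'0; rewrite -cover_s' s'0 cnbhs_nil setU0.
Qed.

Lemma gamma_gr_gt0 (x : T) : 0 < gamma_gr e.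
Proof.
apply: (@legal_size_le_gamma [:: x]); rewrite /= andbT.
by apply/subsetPn; exists x; rewrite ?mem_cnbh ?in_set0.
Qed.

End GrundySequences.

(** * Layers of the lexicographic product and the lower bound *)

Definition near (m a b : nat) := (a != b) && (a - b <= m) && (b - a <= m).

Lemma near_sym m a b : near m a b = near m b a.
Proof. by rewrite /near eq_sym; case: (a - b <= m); rewrite ?andbT ?andbF. Qed.

Section LexprodPathPower.
Variables (n m : nat) (T : finType) (e : rel T).
Local Notation V := ('I_n * T)%type.
Local Notation G := (lexprod (path_pow n m) e).

Lemma in_cnbh_lexprod (v w : V) :
  (w \in cnbh G v) = near m v.1 w.1 || (v.1 == w.1) && (w.2 \in cnbh e v.2).
Proof.
case: v w => i h [j x]; rewrite !inE /lexprod /= xpair_eqE.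
case: (eqVneq i j) => [->|_] /=; last by rewrite !orbF.
by rewrite /path_pow /near !eqxx.
Qed.

Lemma legal_from_layer (i : 'I_n) (C : {set V}) (D : {set T}) s :
  (forall x, (i, x) \in C -> x \in D) -> legal_from e D s ->
  legal_from G C [seq (i, h) | h <- s].
Proof.
elim: s C D => [|h s IH] C D //= CD /andP [fresh_h legal_s]; apply/andP; split.
  apply: contra fresh_h => /subsetP sub_C; apply/subsetP => x x_h.
  by apply/CD/sub_C; rewrite in_cnbh_lexprod eqxx x_h orbT.
apply: (IH _ (D :|: cnbh e h)) => // x /setUP [/CD x_D|].
  by rewrite in_setU x_D.
by rewrite in_cnbh_lexprod /near /= !eqxx /= in_setU => ->; rewrite orbT.
Qed.

Section LowerBound.
Variables (i0 : 'I_n) (x0 : T).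

Definition ord_of (p : nat) : 'I_n := insubd i0 p.

Lemma ord_ofE p : p < n -> ord_of p = p :> nat.
Proof. by move=> lt_pn; rewrite /ord_of val_insubd lt_pn. Qed.

Definition layers_below (p : nat) : {set V} := [set v : V | v.1 < p].

Lemma layers_below0 : layers_below 0 = set0.
Proof. by apply/setP => v; rewrite !inE. Qed.

Lemma layers_below_full p : n <= p -> layers_below p = setT.
Proof. by move=> le_np; apply/setP => v; rewrite !inE (leq_trans _ le_np). Qed.

Definition sweeps (s : seq V) (p q : nat) :=
  legal_from G (layers_below p) s /\ layers_below p :|: cnbhs G s = layers_below q.

Lemma sweeps_cat s1 s2 p q r :
  sweeps s1 p q -> sweeps s2 q r -> sweeps (s1 ++ s2) p r.
Proof.
move=> [legal1 cover1] [legal2 cover2].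
by split; rewrite ?legal_from_cat ?cnbhs_cat ?setUA cover1 ?legal1.
Qed.

Definition vertex_run (p c : nat) : seq V := [seq (ord_of t, x0) | t <- iota p c].

Lemma sweeps_vertex_run c q : 0 < m -> m <= q -> q + c <= n ->
  sweeps (vertex_run (q - m) c) q (q + c).
Proof.
move=> m_gt0; elim: c q => [|c IH] q le_mq le_qcn.
  by rewrite addn0; split; rewrite ?cnbhs_nil ?setU0.
rewrite /vertex_run /= -cat1s.
have -> : (q - m).+1 = q.+1 - m by lia.
rewrite -addSnnS; apply: (sweeps_cat (q := q.+1)); last by apply: IH; lia.
have lt_qn : q < n by lia.
split; rewrite /= ?andbT.
  apply/subsetPn; exists (ord_of q, x0); last by rewrite inE /= ord_ofE // ltnn.
  by rewrite in_cnbh_lexprod /near /= !ord_ofE //; lia.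
apply/setP => [[j x]].
rewrite cnbhs_cons cnbhs_nil setU0 in_setU in_cnbh_lexprod !inE /=.
rewrite /near ord_ofE; last by lia.
apply/idP/idP.
  by case/orP => [|/orP [|/andP [/eqP <- _]]]; rewrite ?ord_ofE; lia.
by move=> lt_jq; case: (ltnP j q) => //= ?; apply/orP; left; lia.
Qed.

Section Copies.
Variables (sg : seq T).
Hypotheses (legal_sg : legal_from e set0 sg) (dom_sg : cnbhs e sg = setT).

Definition layer_copy (p : nat) : seq V := [seq (ord_of p, h) | h <- sg].

Lemma sweeps_layer_copy p : p < n -> sweeps (layer_copy p) p (p + m.+1).
Proof.
move=> lt_pn; split.
  by apply: legal_from_layer legal_sg => x; rewrite inE /= ord_ofE // ltnn.
apply/setP => [[j x]]; rewrite in_setU !inE /=; apply/idP/idP.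
  case/orP => [|/cnbhsP [_ /mapP [h _ ->]]]; first by lia.
  rewrite in_cnbh_lexprod /near /= => /orP [|/andP [/eqP <- _]];
    by rewrite ?ord_ofE //; lia.
move=> lt_j; case: (ltnP j p) => //= le_pj.
have : x \in cnbhs e sg by rewrite dom_sg in_setT.
case/cnbhsP => h h_sg x_h.
apply/cnbhsP; exists (ord_of p, h); first exact: map_f.
rewrite in_cnbh_lexprod /= /near ord_ofE // x_h andbT.
case: (eqVneq (val j) p) => [j_p|]; last by lia.
by apply/orP; right; apply/eqP/val_inj; rewrite /= ord_ofE.
Qed.

Fixpoint spaced_copies (q c : nat) : seq V :=
  if c is c'.+1 then layer_copy q ++ spaced_copies (q + m.+1) c' else [::].

Lemma sweeps_spaced_copies c q : q + c * m.+1 <= n + m ->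
  sweeps (spaced_copies q c) q (q + c * m.+1).
Proof.
elim: c q => [|c IH] q le_qcn /=.
  by rewrite mul0n addn0; split; rewrite ?cnbhs_nil ?setU0.
rewrite mulSn addnA; apply: sweeps_cat (sweeps_layer_copy _) (IH _ _); lia.
Qed.

Definition lower_seq (k : nat) : seq V :=
  layer_copy 0 ++ vertex_run 1 (n - 1 - k.-1 * m.+1)
  ++ spaced_copies (n + m - k.-1 * m.+1) k.-1.

Lemma lower_seq_gds k : 0 < m -> 2 <= k -> k.-1 * m.+1 < n -> is_gds G (lower_seq k).
Proof.
move=> m_gt0 le_2k lt_kn; have le_mk : m.+1 <= k.-1 * m.+1 by rewrite leq_pmull; lia.
set c := n - 1 - k.-1 * m.+1; set q := n + m - k.-1 * m.+1.
have run : sweeps (vertex_run 1 c) m.+1 q.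
  by rewrite -(subSnn m) (_ : q = m.+1 + c); [apply: sweeps_vertex_run | ]; lia.
have copies : sweeps (spaced_copies q k.-1) q (n + m).
  by rewrite -[in X in sweeps _ _ X](_ : q + k.-1 * m.+1 = n + m);
    [apply: sweeps_spaced_copies | ]; lia.
have n_gt0 : 0 < n by lia.
have [legal cover] := sweeps_cat (sweeps_layer_copy n_gt0) (sweeps_cat run copies).
rewrite is_gdsE -layers_below0 legal /=; apply/eqP.
by move: cover; rewrite layers_below0 set0U layers_below_full // leq_addr.
Qed.

Lemma size_lower_seq k : 0 < k ->
  size (lower_seq k) = k * size sg + (n - 1 - k.-1 * m.+1).
Proof.
have size_copies q c : size (spaced_copies q c) = c * size sg.
  by elim: c q => //= c IH q; rewrite size_cat IH size_map mulSn.
move=> k_gt0; rewrite !size_cat !size_map size_iota size_copies.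
by rewrite addnCA -mulSn prednK // addnC.
Qed.

End Copies.
End LowerBound.

Lemma gamma_lexprod_ge k : 0 < m -> 0 < #|T| -> 2 <= k -> k.-1 * m.+1 < n ->
  k * gamma_gr e + (n - 1 - k.-1 * m.+1) <= gamma_gr G.
Proof.
move=> m_gt0 /card_gt0P [x0 _] le_2k lt_kn.
have [sg [gds_sg <-]] := gamma_gr_attained e.
have /and3P [_ /eqP dom_sg legal_sg] := gds_sg.
pose i0 : 'I_n := Ordinal (leq_ltn_trans (leq0n _) lt_kn).
rewrite -(size_lower_seq i0 x0 sg) ?(leq_trans _ le_2k) //.
exact/gds_size_le_gamma/(lower_seq_gds i0 x0 legal_sg dom_sg).
Qed.

End LexprodPathPower.

(** * Sets of layers *)

Section LayerSets.
Variables (n m : nat).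

Lemma interval_leq_card (S : {set 'I_n}) lo c : lo + c <= n ->
  (forall j : 'I_n, lo <= j < lo + c -> j \in S) -> c <= #|S|.
Proof.
move=> le_n S_int; have lt_n (r : 'I_c) : lo + r < n.
  by apply: leq_trans le_n; rewrite ltn_add2l.
have inj_f : injective (fun r : 'I_c => Ordinal (lt_n r)).
  by move=> r r' /(congr1 val) /= /addnI /val_inj.
have <- : #|[set: 'I_c]| = c by rewrite cardsT card_ord.
rewrite -(card_imset _ inj_f).
apply/subset_leq_card/subsetP => _ /imsetP [r _ ->].
by apply: S_int; rewrite /= leq_addr ltn_add2l ltn_ord.
Qed.

Lemma near_card (a : 'I_n) : m < n -> m <= #|[set j : 'I_n | near m a j]|.
Proof.
move=> lt_mn; have := ltn_ord a; case: (leqP m a) => [le_ma|lt_am] lt_an.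
  by apply: (interval_leq_card (lo := a - m)) => [|j]; rewrite ?inE /near; lia.
have card_aS := cardsU1 a [set j : 'I_n | near m a j].
rewrite inE /near eqxx /= add1n in card_aS.
rewrite -ltnS -card_aS; apply: (interval_leq_card (lo := 0)) => // j.
by rewrite !inE -val_eqE /near /=; lia.
Qed.

Lemma far_set_card (S : {set 'I_n}) :
  (forall i j, i \in S -> j \in S -> ~~ near m i j) -> #|S| <= ceildiv n m.+1.
Proof.
move=> far_S; pose blk (i : 'I_n) := (i : nat) %/ m.+1.
have inj_blk : {in S &, injective blk}.
  move=> i j i_S j_S /= eq_blk; apply/val_inj/eqP/negP => /negP ij.
  have := far_S _ _ i_S j_S; rewrite /near ij /=.
  have := divn_eq i m.+1; have := divn_eq j m.+1; rewrite -/(blk i) -/(blk j) eq_blk.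
  have := ltn_pmod i (ltn0Sn m); have := ltn_pmod j (ltn0Sn m); lia.
rewrite cardE -(size_map blk) -(size_iota 0 (ceildiv n m.+1)); apply: uniq_leq_size.
  by rewrite map_inj_in_uniq ?enum_uniq // => i j; rewrite !mem_enum; exact: inj_blk.
move=> _ /mapP [i _ ->]; rewrite mem_iota /blk /ceildiv /= ltn_divLR //.
have := ltn_ord i; have := divn_eq (n + m) m.+1; have := ltn_pmod (n + m) (ltn0Sn m).
lia.
Qed.

Lemma card_below_max (S : {set 'I_n}) (a : 'I_n) :
  a \in S -> (forall i : 'I_n, i \in S -> i <= a) ->
  #|S| = #|[set i in S | i < a]|.+1.
Proof.
move=> a_S max_a; rewrite (cardsD1 a S) a_S add1n; congr _.+1; apply: eq_card => i.
rewrite !inE andbC; case: (boolP (i \in S)) => //= /max_a.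
by rewrite ltn_neqAle -val_eqE => ->; rewrite andbT.
Qed.

Lemma card_split_at (U : {set 'I_n}) (a b : 'I_n) : a < b ->
  #|[set j in U | j < a]| + #|[set j in U | a < j < b]| <= #|[set j in U | j < b]|.
Proof.
move=> lt_ab; rewrite -[_ + _]subn0 -(cards0 'I_n).
have <- : [set j in U | j < a] :&: [set j in U | a < j < b] = set0.
  apply/setP => j; rewrite !inE; case: (j \in U) => //=.
  by apply/negbTE/and3P => -[]; lia.
rewrite -cardsU; apply/subset_leq_card/subsetP => j; rewrite !inE.
by case: (j \in U) => //=; lia.
Qed.

Lemma card_gaps (K U : {set 'I_n}) d :
  (forall a b : 'I_n, a \in K -> b \in K -> a < b ->
     (forall i, i \in K -> ~~ (a < i < b)) -> d <= #|[set j in U | a < j < b]|) ->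
  d * #|K|.-1 <= #|U|.
Proof.
move=> gap.
have below (b : 'I_n) : b \in K ->
    d * #|[set i in K | i < b]| <= #|[set j in U | j < b]|.
  move: {2}(val b) (erefl (val b)) => N; elim/ltn_ind: N b => N IH b b_N b_K.
  case: (set_0Vmem [set i in K | i < b]) => [-> | [a0 a0_below]].
    by rewrite cards0 muln0.
  case: (arg_maxnP (fun i : 'I_n => i : nat) a0_below) => a a_below max_a.
  have /setIdP [a_K lt_ab] := a_below.
  rewrite (card_below_max a_below max_a) mulnS.
  have -> : [set i in [set i in K | i < b] | i < a] = [set i in K | i < a].
    apply/setP => i; rewrite !inE -andbA.
    by case: (ltnP i a) => [lt_ia|]; rewrite ?andbF // (ltn_trans lt_ia lt_ab).
  have gap_ab : d <= #|[set j in U | a < j < b]|.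
    apply: gap => // i i_K; apply/negP => /andP [lt_ai lt_ib].
    have : i <= a by apply: max_a; exact/setIdP.
    lia.
  have IHa := IH a (ltac:(by rewrite -b_N)) a (erefl _) a_K.
  have := card_split_at U lt_ab; lia.
case: (set_0Vmem K) => [-> | [b0 b0_K]]; first by rewrite cards0 muln0.
case: (arg_maxnP (fun i : 'I_n => i : nat) b0_K) => b b_K max_b.
rewrite (card_below_max b_K max_b) /=.
apply: leq_trans (below b b_K) _; apply/subset_leq_card/subsetP => j.
by rewrite inE => /andP [].
Qed.

End LayerSets.

(** * Arithmetic of the formula *)

Definition gamma_formula (n m g : nat) : nat :=
  if m + 1 <= g then ceildiv n (m + 1) * (g - (m + 1)) + n + m
  else 2 * g + n - m - 2.

Lemma gamma_formula_lb n m g : 0 < g -> m + 2 <= n ->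
  exists2 k, 2 <= k /\ k.-1 * m.+1 < n &
    gamma_formula n m g <= k * g + (n - 1 - k.-1 * m.+1).
Proof.
move=> g_gt0 le_n; rewrite /gamma_formula addn1; case: ifP => le_g; last first.
  by exists 2; rewrite ?mul1n; lia.
set k := ceildiv n m.+1.
have k_ub : k * m.+1 <= n + m by rewrite /k /ceildiv /= leq_divM.
have k_ge2 : 2 <= k by rewrite /k /ceildiv /= leq_divRL //; lia.
have le_kg : k * m.+1 <= k * g by rewrite leq_mul2l le_g orbT.
have pred_k : k.-1 * m.+1 = k * m.+1 - m.+1 by rewrite -subn1 mulnBl mul1n.
have k_g : k * (g - m.+1) = k * g - k * m.+1 by rewrite mulnBr.
by exists k; rewrite pred_k ?k_g; lia.
Qed.

Lemma gamma_formula_ub n m g k u N : 0 < g -> 0 < k -> k <= ceildiv n (m + 1) ->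
  m <= u -> m * k.-1 <= u -> N + u <= k * g.-1 + n -> N <= gamma_formula n m g.
Proof.
move=> g_gt0 k_gt0 k_ub u_m u_k N_u; rewrite /gamma_formula.
move: u_k; rewrite mulnC -subn1 mulnBl mul1n => u_k.
have m_km : m <= k * m by rewrite leq_pmull.
case: ifP => le_g.
  have c_k : k * (g - (m + 1)) <= ceildiv n (m + 1) * (g - (m + 1)).
    by rewrite leq_mul2r k_ub orbT.
  have k_g : k * g.-1 = k * (g - (m + 1)) + k * m.
    by rewrite -mulnDr; congr (_ * _); lia.
  lia.
case: (leqP k 1) => [le_k1|lt_1k].
  by move: N_u u_k; rewrite (_ : k = 1) ?mul1n; lia.
have split_g : k * g.-1 = 2 * g.-1 + k.-2 * g.-1.
  by rewrite -mulnDl; congr (_ * _); lia.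
have split_m : k * m = 2 * m + k.-2 * m by rewrite -mulnDl; congr (_ * _); lia.
have : k.-2 * g.-1 <= k.-2 * m by rewrite leq_mul2l; apply/orP; right; lia.
lia.
Qed.

(** * The upper bound *)

Lemma exists_switch (P : pred nat) N :
  ~~ P 0 -> P N -> exists2 t, t < N & ~~ P t && P t.+1.
Proof.
move=> P0 PN; have ex_P : exists t, P t by exists N.
case: (ex_minnP ex_P) => t1 P_t1 min_t1.
have t1_gt0 : 0 < t1 by rewrite lt0n; apply: contraNneq P0 => <-.
exists t1.-1; first by rewrite prednK // min_t1.
rewrite prednK // P_t1 andbT; apply/negP => /min_t1; rewrite -ltnS prednK //.
by rewrite ltnn.
Qed.

Section UpperBound.
Variables (n m : nat) (T : finType) (e : rel T).
Local Notation V := ('I_n * T)%type.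
Local Notation G := (lexprod (path_pow n m) e).
Variables (z : V) (s : seq V).
Local Notation v t := (nth z s t).

Definition dominated (t : nat) : {set V} := cnbhs G (take t s).

Lemma dominatedP w t :
  reflect (exists t', [/\ t' < t, t' < size s & w \in cnbh G (v t')])
          (w \in dominated t).
Proof.
apply: (iffP (cnbhsP _ _ _)) => [[_ /(nthP z) [i lt_i <-]]|[t' [lt_t' lt_s w_t']]].
  rewrite size_take_min leq_min in lt_i; case/andP: lt_i => lt_it lt_is.
  by rewrite nth_take //; exists i.
exists (v t') => //; rewrite -(nth_take z lt_t') mem_nth //.
by rewrite size_take_min leq_min lt_t'.
Qed.

Lemma dominated_mono t t' : t <= t' -> dominated t \subset dominated t'.
Proof.
move=> le_tt'; apply/subsetP => w /dominatedP [u [lt_ut lt_us w_u]].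
by apply/dominatedP; exists u; split=> //; apply: leq_trans le_tt'.
Qed.

Lemma dominated0 : dominated 0 = set0.
Proof. by rewrite /dominated take0 cnbhs_nil. Qed.

Lemma dominatedS t : t < size s -> dominated t.+1 = dominated t :|: cnbh G (v t).
Proof.
move=> lt_ts; rewrite /dominated (take_nth z lt_ts) -cats1.
by rewrite cnbhs_cat cnbhs_cons cnbhs_nil setU0.
Qed.

Definition internal t :=
  [exists x, (x \in cnbh e (v t).2) && (((v t).1, x) \notin dominated t)].

Definition layer_dominated (j : 'I_n) t := [forall x, (j, x) \in dominated t].

Definition completes (j : 'I_n) t := ~~ layer_dominated j t && layer_dominated j t.+1.

Lemma layer_dominated_mono j t t' :
  t <= t' -> layer_dominated j t -> layer_dominated j t'.
Proof.
move=> le_tt' /forallP dom_j; apply/forallP => x.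
exact: subsetP (dominated_mono le_tt') _ (dom_j x).
Qed.

Lemma completes_uniq j t t' : completes j t -> completes j t' -> t = t'.
Proof.
move=> /andP [not_t dom_t] /andP [not_t' dom_t'].
case: (ltngtP t t') => // [lt_tt'|lt_t't].
  by rewrite (layer_dominated_mono lt_tt' dom_t) in not_t'.
by rewrite (layer_dominated_mono lt_t't dom_t') in not_t.
Qed.

Lemma layer_dominated_near t t' (j : 'I_n) :
  t' < t -> t' < size s -> near m (v t').1 j -> layer_dominated j t.
Proof.
move=> lt_t't lt_t's near_j; apply/forallP => x; apply/dominatedP.
by exists t'; rewrite in_cnbh_lexprod near_j.
Qed.

Lemma internal_far_before t t' :
  internal t -> t' < t -> t' < size s -> ~~ near m (v t').1 (v t).1.
Proof.
move=> /existsP [x /andP [_ fresh_x]] lt_t't lt_t's; apply: contra fresh_x => near_t.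
exact: (forallP (layer_dominated_near lt_t't lt_t's near_t)).
Qed.

Lemma layer_undominated0 j : ~~ layer_dominated j 0.
Proof. by apply/forallPn; exists z.2; rewrite dominated0 in_set0. Qed.

Definition completed_by (P : nat -> 'I_n -> bool) : {set 'I_n} :=
  [set j | [exists t : 'I_(size s), P t j && completes j t]].

Definition ext_completed := completed_by (fun t _ => ~~ internal t).
Definition self_completed := completed_by (fun t j => internal t && ((v t).1 == j)).
Definition cross_completed := completed_by (fun t j => internal t && ((v t).1 != j)).

Definition internal_layers : {set 'I_n} :=
  [set i | [exists t : 'I_(size s), internal t && ((v t).1 == i)]].

Lemma completed_by_disjoint (P Q : nat -> 'I_n -> bool) :
  (forall t j, P t j -> Q t j -> False) -> completed_by P :&: completed_by Q = set0.
Proof.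
move=> PQ; apply/setP => j; rewrite !inE; apply/negbTE/andP.
case=> /existsP [t /andP [Pt ct]] /existsP [t' /andP [Qt' ct']].
by apply: (PQ t j) => //; rewrite (completes_uniq ct ct').
Qed.

Lemma completed_card_le :
  #|ext_completed| + #|self_completed| + #|cross_completed| <= n.
Proof.
have ext_self : ext_completed :&: self_completed = set0.
  by apply: completed_by_disjoint => t j /negP ? /andP [].
have ext_cross : ext_completed :&: cross_completed = set0.
  by apply: completed_by_disjoint => t j /negP ? /andP [].
have self_cross : self_completed :&: cross_completed = set0.
  by apply: completed_by_disjoint => t j /andP [_ /eqP ->] /andP [_]; rewrite eqxx.
have card_union : #|ext_completed :|: self_completed :|: cross_completed| =
    #|ext_completed| + #|self_completed| + #|cross_completed|.
  by rewrite !cardsU setIUl ext_self ext_cross self_cross setU0 !cards0 !subn0.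
by rewrite -card_union (leq_trans (max_card _)) ?card_ord.
Qed.

Definition layer_internal (i : 'I_n) : seq nat :=
  [seq t <- iota 0 (size s) | internal t && ((v t).1 == i)].

Lemma mem_layer_internal i t :
  (t \in layer_internal i) = [&& t < size s, internal t & (v t).1 == i].
Proof. by rewrite mem_filter mem_iota add0n andbC andbA. Qed.

Lemma sum_size_layer_internal :
  \sum_(i < n) size (layer_internal i) = count internal (iota 0 (size s)).
Proof.
under eq_bigr => i _ do rewrite size_filter.
elim: (iota 0 (size s)) => [|t l IH] /=; first by rewrite big1.
rewrite big_split /= IH; congr (_ + _).
case: (internal t) => /=; last by rewrite big1.
rewrite (bigD1 (v t).1) //= eqxx big1 // => i ti.
by rewrite eq_sym (negbTE ti).
Qed.

Lemma legal_from_layer_steps (i : 'I_n) L (D : {set T}) : sorted ltn L ->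
  (forall t, t \in L -> [&& t < size s, internal t & (v t).1 == i]) ->
  (forall t x, t \in L -> x \in D -> (i, x) \in dominated t) ->
  legal_from e D [seq (v t).2 | t <- L].
Proof.
elim: L D => [|t L IH] D //= sorted_tL tL_i D_dom.
have /and3P [lt_ts /existsP [x /andP [x_t fresh_x]] /eqP t_i] :=
  tL_i t (mem_head _ _).
have t_min : all (ltn t) L := order_path_min ltn_trans sorted_tL.
apply/andP; split.
  apply/negP => /subsetP /(_ x x_t) x_D.
  by move: fresh_x; rewrite t_i D_dom ?mem_head.
apply: IH => [|t' t'_L|t' y t'_L /setUP [y_D|y_t]].
- exact: path_sorted sorted_tL.
- by apply: tL_i; rewrite in_cons t'_L orbT.
- have lt_tt' : t < t' by move/allP: t_min; apply.
  exact: subsetP (dominated_mono (ltnW lt_tt')) _ (D_dom t y (mem_head _ _) y_D).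
- apply/dominatedP; exists t; split=> //; first by move/allP: t_min; apply.
  by rewrite in_cnbh_lexprod t_i eqxx y_t orbT.
Qed.

Lemma legal_layer_internal i :
  legal_from e set0 [seq (v t).2 | t <- layer_internal i].
Proof.
apply: (legal_from_layer_steps (i := i)) => [|t|t x _]; last by rewrite in_set0.
  by apply: sorted_filter; [exact: ltn_trans | exact: iota_ltn_sorted].
by rewrite mem_layer_internal.
Qed.

Section GrundyDominatingSequence.
Hypotheses (legal_s : legal_from G set0 s) (dom_s : cnbhs G s = setT).

Lemma fresh_step t : t < size s -> ~~ (cnbh G (v t) \subset dominated t).
Proof.
move=> lt_ts; have legal := legal_s.
rewrite -(cat_take_drop t s) (drop_nth z lt_ts) legal_from_cat set0U /= in legal.
by case/and3P: legal.
Qed.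

Lemma external_step_completes t :
  t < size s -> ~~ internal t -> exists j, completes j t.
Proof.
move=> lt_ts ext_t; have /subsetPn [[j x] jx_t jx_fresh] := fresh_step lt_ts.
move: jx_t; rewrite in_cnbh_lexprod /= => /orP [near_j|/andP [/eqP t_j x_t]].
  exists j; apply/andP; split; first by apply/forallPn; exists x.
  by apply/forallP => y; rewrite dominatedS // in_setU in_cnbh_lexprod near_j orbT.
by case/negP: ext_t; apply/existsP; exists x; rewrite x_t t_j.
Qed.

Lemma external_steps_le :
  count (predC internal) (iota 0 (size s)) <= #|ext_completed|.
Proof.
pose f t := odflt (v t).1 [pick j | completes j t].
have f_completes t : t < size s -> ~~ internal t -> completes (f t) t.
  move=> lt_ts ext_t; rewrite /f; case: pickP => [//|none].
  by have [j] := external_step_completes lt_ts ext_t; rewrite none.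
rewrite -size_filter; set X := filter _ _.
have X_ext t : t \in X -> (t < size s) && ~~ internal t.
  by rewrite mem_filter mem_iota andbC.
have uniq_fX : uniq (map f X).
  rewrite map_inj_in_uniq ?filter_uniq ?iota_uniq // => t t'.
  move=> /X_ext /andP [lt_t ext_t] /X_ext /andP [lt_t' ext_t'] eq_f.
  by apply: completes_uniq (f_completes t lt_t ext_t) _; rewrite eq_f f_completes.
rewrite -(size_map f) -(card_uniqP uniq_fX); apply/subset_leq_card/subsetP.
move=> _ /mapP [t /X_ext /andP [lt_t ext_t] ->]; rewrite inE; apply/existsP.
by exists (Ordinal lt_t); rewrite /= ext_t f_completes.
Qed.

Lemma layer_completion i : exists2 t, t < size s & completes i t.
Proof.
apply: exists_switch (layer_undominated0 i) _.
by apply/forallP => x; rewrite /dominated take_size dom_s in_setT.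
Qed.

Lemma layer_internal_before_completion i t t' :
  i \notin self_completed -> completes i t' -> t \in layer_internal i -> t < t'.
Proof.
move=> i_self compl_t'; rewrite mem_layer_internal => /and3P [lt_ts int_t /eqP t_i].
have undom_t : ~~ layer_dominated i t.
  case/existsP: int_t => x /andP [_ fresh_x].
  by apply/forallPn; exists x; rewrite -t_i.
case: (ltngtP t t') => // [lt_t't|eq_tt'].
  case/andP: compl_t' => _ /(layer_dominated_mono lt_t't).
  by rewrite (negbTE undom_t).
case/negP: i_self; rewrite inE; apply/existsP; exists (Ordinal lt_ts).
by rewrite /= int_t t_i eqxx eq_tt'.
Qed.

Lemma layer_internal_lt i :
  i \notin self_completed -> size (layer_internal i) < gamma_gr e.
Proof.
move=> i_self; have [t' _ compl_t'] := layer_completion i.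
rewrite -(size_map (fun t => (v t).2)).
apply: legal_size_lt_gamma (legal_layer_internal i) _.
have /andP [/forallPn [x undom_x] _] := compl_t'.
apply/negP => /eqP cover_H.
have : x \in cnbhs e [seq (v t).2 | t <- layer_internal i].
  by rewrite cover_H in_setT.
case/cnbhsP => _ /mapP [t t_i ->] x_t; case/negP: undom_x; apply/dominatedP; exists t.
have := t_i; rewrite mem_layer_internal => /and3P [lt_ts _ /eqP <-].
split=> //; first exact: layer_internal_before_completion compl_t' t_i.
by rewrite in_cnbh_lexprod eqxx x_t orbT.
Qed.

Lemma layer_internal_nil i : i \notin internal_layers -> layer_internal i = [::].
Proof.
move=> i_K; rewrite -(filter_pred0 (iota 0 (size s))); apply: eq_in_filter => t.
rewrite mem_iota add0n => lt_ts; apply/negbTE; apply: contra i_K => int_t.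
by rewrite inE; apply/existsP; exists (Ordinal lt_ts).
Qed.

Lemma size_layer_internal_le i : size (layer_internal i) <=
  (i \in internal_layers) * (gamma_gr e).-1 + (i \in self_completed).
Proof.
case: (boolP (i \in internal_layers)) => [_|/layer_internal_nil -> //]; rewrite mul1n.
case: (boolP (i \in self_completed)) => [_|/layer_internal_lt]; last by lia.
have := legal_size_le_gamma (legal_layer_internal i); rewrite size_map; lia.
Qed.

Lemma internal_steps_le : count internal (iota 0 (size s)) <=
  #|internal_layers| * (gamma_gr e).-1 + #|self_completed|.
Proof.
have sum_mem (A : {set 'I_n}) c : \sum_(i < n) (i \in A) * c = #|A| * c.
  rewrite -sum_nat_const [RHS]big_mkcond /=; apply: eq_bigr => i _.
  by case: (i \in A); rewrite ?mul1n ?mul0n.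
rewrite -sum_size_layer_internal -(muln1 #|self_completed|) -!sum_mem -big_split /=.
by apply: leq_sum => i _; rewrite muln1 size_layer_internal_le.
Qed.

Lemma size_add_cross_le :
  size s + #|cross_completed| <= #|internal_layers| * (gamma_gr e).-1 + n.
Proof.
have := count_predC internal (iota 0 (size s)); rewrite size_iota.
have := external_steps_le; have := internal_steps_le; have := completed_card_le; lia.
Qed.

Lemma internal_layers_far i j :
  i \in internal_layers -> j \in internal_layers -> ~~ near m i j.
Proof.
rewrite !inE => /existsP [t /andP [int_t /eqP t_i]].
move=> /existsP [t' /andP [int_t' /eqP t'_j]].
case: (ltngtP t t') => [lt_tt'|lt_t't|/val_inj eq_tt'].
- by rewrite -t_i -t'_j internal_far_before.
- by rewrite near_sym -t_i -t'_j internal_far_before.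
- by rewrite -t_i -t'_j eq_tt' /near eqxx.
Qed.

Definition first_visit (i : 'I_n) : nat := find (fun w : V => w.1 == i) s.

Lemma first_visitP i : i \in internal_layers ->
  [/\ first_visit i < size s, (v (first_visit i)).1 = i
    & forall t, t < first_visit i -> (v t).1 != i].
Proof.
rewrite inE => /existsP [t /andP [_ /eqP t_i]].
have has_i : has (fun w : V => w.1 == i) s.
  by apply/hasP; exists (v t); rewrite ?mem_nth ?t_i.
split; first by rewrite -has_find.
  exact/eqP/(nth_find z has_i).
by move=> t' lt_t'; have /= -> := before_find z lt_t'.
Qed.

Lemma not_near_before_first_visit i t :
  i \in internal_layers -> t < first_visit i -> ~~ near m (v t).1 i.
Proof.
move=> i_K lt_t; move: (i_K); rewrite inE => /existsP [t1 /andP [int_t1 /eqP t1_i]].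
have le_t1 : first_visit i <= t1.
  by rewrite leqNgt; apply/negP => /(before_find z); rewrite /= t1_i eqxx.
have lt_tt1 : t < t1 := leq_trans lt_t le_t1.
by rewrite -t1_i (internal_far_before int_t1 lt_tt1 (ltn_trans lt_tt1 (ltn_ord t1))).
Qed.

Lemma internal_first_visit i : i \in internal_layers -> internal (first_visit i).
Proof.
move=> i_K; have [_ f_i before_f] := first_visitP i_K.
apply/existsP; exists (v (first_visit i)).2; rewrite mem_cnbh /=.
apply/negP => /dominatedP [t [lt_t _]]; rewrite in_cnbh_lexprod f_i.
case/orP => [near_t|/andP [/eqP t_i _]].
  by have := not_near_before_first_visit i_K lt_t; rewrite near_t.
by have := before_f t lt_t; rewrite t_i eqxx.
Qed.

Section BetweenInternalLayers.
Variables (a b : 'I_n).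
Hypotheses (a_K : a \in internal_layers) (b_K : b \in internal_layers).
Hypothesis lt_ab : a < b.
Hypothesis no_K_between : forall i, i \in internal_layers -> ~~ (a < i < b).

(* A step in a layer strictly between a + m and b - m cannot be internal, so its
   own vertex was dominated by an earlier step in a nearby layer. *)
Lemma steps_before_first_visits t : t < first_visit a -> t < first_visit b ->
  ((v t).1 + m < a) || (b + m < (v t).1).
Proof.
elim/ltn_ind: t => t IH lt_ta lt_tb.
have [lt_as _ before_a] := first_visitP a_K; have [_ _ before_b] := first_visitP b_K.
have lt_ts : t < size s := ltn_trans lt_ta lt_as.
have := not_near_before_first_visit a_K lt_ta.
have := not_near_before_first_visit b_K lt_tb.
have := before_a t lt_ta; have := before_b t lt_tb; rewrite /near -!val_eqE /=.
case: (boolP (_ || _)) => // outside t_b t_a near_b near_a.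
have t_notK : (v t).1 \notin internal_layers.
  by apply/negP => /no_K_between; rewrite negb_and; lia.
have : ~~ internal t.
  apply: contra t_notK => int_t; rewrite inE; apply/existsP.
  by exists (Ordinal lt_ts); rewrite /= int_t eqxx.
rewrite negb_exists => /forallP /(_ (v t).2); rewrite mem_cnbh /= negbK.
case/dominatedP => t' [lt_t't _]; rewrite in_cnbh_lexprod /= /near -val_eqE /=.
have := IH t' lt_t't (ltn_trans lt_t't lt_ta) (ltn_trans lt_t't lt_tb); lia.
Qed.

Lemma layer_undominated_before_first_visits t (j : 'I_n) :
  t <= first_visit a -> t <= first_visit b -> a < j < b -> ~~ layer_dominated j t.
Proof.
move=> le_ta le_tb j_ab; apply/forallPn; exists z.2; apply/negP.
case/dominatedP => t' [lt_t't _]; rewrite in_cnbh_lexprod /= /near -val_eqE /=.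
have := steps_before_first_visits (leq_trans lt_t't le_ta) (leq_trans lt_t't le_tb).
lia.
Qed.

Lemma cross_completed_between : m <= #|[set j in cross_completed | a < j < b]|.
Proof.
have far_ab : a + m < b.
  by have := internal_layers_far a_K b_K; rewrite /near; lia.
have cross_near c (j : 'I_n) : c \in internal_layers ->
    first_visit c <= first_visit a -> first_visit c <= first_visit b ->
    a < j < b -> near m c j -> j \in [set j in cross_completed | a < j < b].
  move=> c_K le_ca le_cb j_ab near_cj; rewrite !inE j_ab andbT.
  have [lt_cs c_c _] := first_visitP c_K.
  apply/existsP; exists (Ordinal lt_cs); rewrite /= internal_first_visit // c_c.
  have c_j : c != j by apply: contraTneq near_cj => ->; rewrite /near eqxx.
  rewrite c_j /completes layer_undominated_before_first_visits //.
  by apply: (layer_dominated_near (ltnSn _) lt_cs); rewrite c_c.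
have := ltn_ord b.
case: (ltngtP (first_visit a) (first_visit b)) => [lt_f|lt_f|eq_f] lt_bn.
- apply: (interval_leq_card (lo := a + 1)) => [|j j_int]; first by lia.
  by apply: (cross_near a) => //; [exact: ltnW | lia | rewrite /near /=; lia].
- apply: (interval_leq_card (lo := b - m)) => [|j j_int]; first by lia.
  by apply: (cross_near b) => //; [exact: ltnW | lia | rewrite /near /=; lia].
- have [_ a_a _] := first_visitP a_K; have [_ b_b _] := first_visitP b_K.
  by move: lt_ab; rewrite -a_a -b_b eq_f ltnn.
Qed.
End BetweenInternalLayers.

Lemma gds_size_gt0 : 0 < size s.
Proof.
by case: s dom_s => //= /setP /(_ z); rewrite cnbhs_nil in_set0 in_setT.
Qed.

Lemma internal_first_step : internal 0.
Proof. by apply/existsP; exists (v 0).2; rewrite mem_cnbh dominated0 in_set0. Qed.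

Lemma internal_layers_gt0 : 0 < #|internal_layers|.
Proof.
apply/card_gt0P; exists (v 0).1; rewrite inE; apply/existsP.
by exists (Ordinal gds_size_gt0); rewrite /= internal_first_step eqxx.
Qed.

Lemma cross_completed_ge_m : m < n -> m <= #|cross_completed|.
Proof.
move=> lt_mn; apply: leq_trans (near_card (v 0).1 lt_mn) _.
apply/subset_leq_card/subsetP => j; rewrite !inE => near_j.
apply/existsP; exists (Ordinal gds_size_gt0); rewrite /= internal_first_step.
have -> /= : (v 0).1 != j by apply: contraTneq near_j => ->; rewrite /near eqxx.
rewrite /completes layer_undominated0 /=.
exact: layer_dominated_near (ltnSn 0) gds_size_gt0 near_j.
Qed.

Lemma cross_completed_ge : m * #|internal_layers|.-1 <= #|cross_completed|.
Proof. by apply: card_gaps => a b; exact: cross_completed_between. Qed.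

Lemma gds_size_le_formula : m < n -> size s <= gamma_formula n m (gamma_gr e).
Proof.
move=> lt_mn.
apply: (gamma_formula_ub (k := #|internal_layers|) (u := #|cross_completed|)).
- exact: gamma_gr_gt0 z.2.
- exact: internal_layers_gt0.
- by rewrite addn1; apply: far_set_card; exact: internal_layers_far.
- exact: cross_completed_ge_m.
- exact: cross_completed_ge.
- exact: size_add_cross_le.
Qed.
End GrundyDominatingSequence.
End UpperBound.

Lemma gamma_lexprod_le (n m : nat) (T : finType) (e : rel T) : m < n ->
  gamma_gr (lexprod (path_pow n m) e) <= gamma_formula n m (gamma_gr e).
Proof.
move=> lt_mn; have [s [gds_s <-]] := gamma_gr_attained (lexprod (path_pow n m) e).
case/and3P: gds_s => _ /eqP dom_s legal_s.
by case: s dom_s legal_s => [//|z s'] dom_s legal_s; apply: gds_size_le_formula.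
Qed.

Theorem theorem6 (n m : nat) (T : finType) (e : rel T) :
  0 < n -> 0 < m -> m + 2 <= n ->
  symmetric e -> irreflexive e -> 0 < #|T| ->
  gamma_gr (lexprod (path_pow n m) e) =
    if m + 1 <= gamma_gr e
    then ceildiv n (m + 1) * (gamma_gr e - (m + 1)) + n + m
    else 2 * gamma_gr e + n - m - 2.
Proof.
move=> _ m_gt0 le_n _ _ T_gt0; have [x0 _] := card_gt0P T_gt0.
apply/eqP; rewrite eqn_leq; apply/andP; split.
  by apply: gamma_lexprod_le; lia.
have [k [le_2k lt_kn] le_k] := gamma_formula_lb (gamma_gr_gt0 e x0) le_n.
apply: leq_trans le_k _; exact: gamma_lexprod_ge.
Qed.
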